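(* The sequence $(h(n))_{n\ge0}$ is not strongly $3$-recursive. In fact, for any natural numbers $r<t$, the sequence $(h(3^tn))_{n\ge0}$ is not a linear combination of the sequences $(h(3^rn+a))_{n\ge0}$, $0\le a<3^r$.
   Context: Define $h:\mathbb N\to\mathbb N$ by $h(0)=0$; $h(n)=h(\lfloor n/3\rfloor)+(\lfloor n/3\rfloor \bmod 2)$ if $n>0$ and $n\equiv 0$ or $2\pmod 3$; and $h(n)=h(\lfloor n/9\rfloor)+1$ if $n\equiv1\pmod 3$. Here $x\bmod 2\in\{0,1\}$ is the least nonnegative remainder. A sequence $(f(n))_{n\ge 0}$ is strongly $k$-recursive if there exist natural numbers $r<t$ such that for every $b$ with $0\le b<k^t$, the sequence $(f(k^t n+b))_{n\ge 0}$ is a linear combination, with constant coefficients, of the sequences $(f(k^r n+a))_{n\ge0}$ with $0\le a<k^r$. *)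

From mathcomp Require Import all_boot all_order all_algebra zify.
Set Implicit Arguments. Unset Strict Implicit. Unset Printing Implicit Defensive.
Import GRing.Theory Num.Theory.

(* h via fuel: each recursive call strictly decreases n (when n > 0),
   so fuel n suffices; see h_eq0, h_eq1, h_eq02 below. *)
Fixpoint h_aux (fuel n : nat) : nat :=
  match fuel with
  | 0 => 0
  | S f =>
      if n == 0 then 0
      else if n %% 3 == 1 then h_aux f (n %/ 9) + 1
      else h_aux f (n %/ 3) + (n %/ 3) %% 2
  end.

Definition h (n : nat) : nat := h_aux n n.

Lemma h_aux_stable f g n : n <= f -> n <= g -> h_aux f n = h_aux g n.
Proof.
elim: f g n => [|f IH] [|g] n Hf Hg /=; try by (have -> : n = 0 by lia).
all: try done.
case: (n =P 0) => // n0.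
case: ifP => _; idtac.
all: rewrite (IH g) //; lia.
Qed.

Lemma h_eq0 : h 0 = 0. Proof. by []. Qed.

Lemma h_eq1 n : n %% 3 = 1 -> h n = h (n %/ 9) + 1.
Proof.
move=> H; rewrite /h; case: n H => [//|m] H /=.
by rewrite H /= (@h_aux_stable m (m.+1 %/ 9)) //; lia.
Qed.

Lemma h_eq02 n : 0 < n -> n %% 3 != 1 -> h n = h (n %/ 3) + (n %/ 3) %% 2.
Proof.
move=> Hp H; rewrite /h; case: n Hp H => [//|m] _ H /=.
by rewrite (negbTE H) (@h_aux_stable m (m.+1 %/ 3)) //; lia.
Qed.

Local Open Scope ring_scope.

Definition strongly_recursive (R : numFieldType) (k : nat) (f : nat -> R) : Prop :=
  exists r t : nat, (r < t)%N /\
    forall b : nat, (b < k ^ t)%N ->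
      exists c : nat -> R, forall n : nat,
        f (k ^ t * n + b)%N = \sum_(a < k ^ r) c a * f (k ^ r * n + a)%N.

(** Each step [m |-> m %/ 3] of the recursion adds [odd m] to [h], so [h n] counts the odd
    numbers among [n, n %/ 3, n %/ 9, ...].  For [a < 3 ^ r] the first [r] of these for
    [3 ^ r * n + a] have parity [odd n (+) odd (a %/ 3 ^ i)], hence [h (3 ^ r * n + a)]
    is [h n + p_a] or [h n + r - p_a] according to the parity of [n], where [p_a] counts
    the odd [a %/ 3 ^ i], [i < r].  A combination [sum_a c_a h (3 ^ r * n + a)] thus takes
    the values [S0], [S + S0] and [(r + 1) S - S0] at [n = 0, 4, 1], while [h (3 ^ t * n)]
    takes the values [0], [1] and [t + 1]; this forces [S0 = 0], [S = 1] and [t = r]. *)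
From mathcomp Require Import all_boot all_order all_algebra zify ring.
Import GRing.Theory Num.Theory.

Lemma h_div3 m : h m = h (m %/ 3) + odd m.
Proof.
elim/ltn_ind: m => m IH.
case: (posnP m) => [-> //|m_gt0].
have [q [s s_lt3 m_eq]] : exists q, exists2 s, s < 3 & m = 3 * q + s.
  by exists (m %/ 3), (m %% 3); [rewrite ltn_mod | rewrite mulnC -divn_eq].
subst m.
have q_eq : (3 * q + s) %/ 3 = q by lia.
rewrite q_eq oddD oddM /=.
case: (s =P 1) => [s_eq1 | s_neq1].
  rewrite s_eq1 [h (3 * q + 1)]h_eq1; last by lia.
  have -> : (3 * q + 1) %/ 9 = q %/ 3 by lia.
  rewrite (IH q); last by lia.
  by case: (odd q) => /=; lia.
rewrite [h (3 * q + s)]h_eq02 // ?q_eq; last by apply/eqP; lia.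
have [-> | ->] : s = 0 \/ s = 2 by lia.
all: by rewrite modn2; case: (odd q).
Qed.

Section DigitBlocks.

Variable k : nat.

Fixpoint odd_quotients r a :=
  if r is r'.+1 then odd a + odd_quotients r' (a %/ k) else 0.

Lemma odd_quotients_le r a : odd_quotients r a <= r.
Proof.
by elim: r a => [|r IH] a //=; have := IH (a %/ k); case: (odd a); lia.
Qed.

Lemma odd_quotients0 r : odd_quotients r 0 = 0.
Proof. by elim: r => //= r; rewrite div0n => ->. Qed.

Hypothesis k_odd : odd k.
Variable g : nat -> nat.
Hypothesis g_divk : forall m, g m = g (m %/ k) + odd m.

Lemma g_block r n a : a < k ^ r ->
  g (k ^ r * n + a) =
    g n + (if odd n then r - odd_quotients r a else odd_quotients r a).
Proof.
have k_gt0 : 0 < k by case: k k_odd.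
elim: r a => [|r IH] a a_lt.
  have -> : a = 0 by rewrite expn0 in a_lt; lia.
  by rewrite expn0 mul1n addn0; case: (odd n); rewrite ?subn0 addn0.
rewrite g_divk expnSr mulnAC divnMDl // IH; last by rewrite ltn_divLR // -expnSr.
rewrite oddD !oddM oddX k_odd orbT -addnA /=; congr (_ + _).
have := odd_quotients_le r (a %/ k).
by case: (odd n); case: (odd a) => /=; lia.
Qed.

End DigitBlocks.

Lemma h_block r n a : a < 3 ^ r ->
  h (3 ^ r * n + a) =
    h n + (if odd n then r - odd_quotients 3 r a else odd_quotients 3 r a).
Proof. exact/g_block/h_div3. Qed.

Local Open Scope ring_scope.

Lemma h_lincomb_block (R : comNzRingType) (r n : nat) (c : nat -> R) :
  let S := \sum_(a < 3 ^ r) c a in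
  let S0 := \sum_(a < 3 ^ r) c a * (odd_quotients 3 r a)%:R in
  \sum_(a < 3 ^ r) c a * (h (3 ^ r * n + a))%:R =
    S * (h n)%:R + (if odd n then S *+ r - S0 else S0).
Proof.
move=> S S0; rewrite /S /S0 mulr_suml.
case n_par: (odd n); rewrite -?sumrMnl -?sumrB -big_split /=.
all: apply: eq_bigr => a _; rewrite h_block // n_par.
- rewrite natrD natrB ?odd_quotients_le // -mulr_natr; ring.
- rewrite natrD; ring.
Qed.

Lemma h_scaled t n : h (3 ^ t * n) = (h n + (if odd n then t else 0))%N.
Proof.
rewrite -[(3 ^ t * n)%N]addn0 h_block ?expn_gt0 //.
by rewrite odd_quotients0 subn0.
Qed.

Lemma h_scaled_not_lincomb (R : numDomainType) (r t : nat) : (r < t)%N ->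
  ~ exists c : nat -> R, forall n : nat,
      (h (3 ^ t * n))%:R = \sum_(a < 3 ^ r) c a * (h (3 ^ r * n + a))%:R.
Proof.
move=> r_lt_t [c lincomb].
have := lincomb 0%N; have := lincomb 4%N; have := lincomb 1%N.
rewrite !h_lincomb_block !h_scaled /=.
set S := \sum_(a < _) c a; set S0 := \sum_(a < _) _.
have [-> -> ->] : [/\ h 0 = 0, h 1 = 1 & h 4 = 1]%N by [].
rewrite !addn0 mulr0 mulr1 add0r => E1 E4 S0_eq0.
rewrite -S0_eq0 addr0 in E4.
move: E1; rewrite -S0_eq0 subr0 -E4 -mulrS add1n => /eqP.
by rewrite eqr_nat; lia.
Qed.

Theorem mainTheorem11 (R : numFieldType) :
  ~ strongly_recursive 3 (fun n => (h n)%:R : R) /\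
  forall r t : nat, (r < t)%N ->
    ~ exists c : nat -> R, forall n : nat,
        (h (3 ^ t * n)%N)%:R = \sum_(a < 3 ^ r) c a * (h (3 ^ r * n + a)%N)%:R.
Proof.
split; last exact: h_scaled_not_lincomb.
move=> [r [t [r_lt_t rec]]].
have [c lincomb] := rec 0%N (expn_gt0 3 t).
by apply: (h_scaled_not_lincomb R r t r_lt_t); exists c => n; rewrite -lincomb addn0.
Qed.
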